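(* Let $k\ge3$ and let $(G,c)$ be the planar $2k$-terminal grid network defined as follows: non-terminal vertices $u_{i,j}$ for $1\le i,j\le k$; terminals $v_1,\dots,v_k,h_1,\dots,h_k$, with $v_j$ adjacent only to $u_{1,j}$ and $h_i$ adjacent only to $u_{i,1}$; grid edges $u_{i,j}u_{i+1,j}$ ($1\le i\le k-1$, $1\le j\le k$) and $u_{i,j}u_{i,j+1}$ ($1\le i\le k$, $1\le j\le k-1$). Costs: terminal edges cost $k^4$; edges $u_{i,k}u_{i+1,k}$ and $u_{k,j}u_{k,j+1}$ cost $k^4$; edges $u_{i,j}u_{i+1,j}$ with $i,j\le k-1$ cost $1$; edges $u_{i,j}u_{i,j+1}$ with $i,j\le k-1$ cost $1-j/k^4$. Let $A_G$ be a cutset-edge incidence matrix of $(G,c)$. Then $\mathrm{rank}(A_G)\ge (k-1)^2$.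
   Context: The terminal set is $Q=\{v_1,\dots,v_k,h_1,\dots,h_k\}$ (so there are $2k$ terminals). A cut $(W,V(G)\setminus W)$ is $S$-separating if $W\cap Q\in\{S,Q\setminus S\}$; its cutset is the set of edges with exactly one endpoint in $W$ and its cost is the total cost of the cutset. Cutset-edge incidence matrix: fix an enumeration $S_1,\dots,S_m$, $m=2^{2k-1}-1$, of representatives of the distinct nontrivial bipartitions of $Q$, and for each a minimum-cost $S_t$-separating cut (ties broken arbitrarily); $A_G\in\{0,1\}^{m\times E(G)}$ has entry $(t,e)$ equal to $1$ iff $e$ lies in the cutset of the chosen cut for $S_t$. *)

From HB Require Import structures.
From mathcomp Require Import all_boot all_order all_algebra.
Set Implicit Arguments. Unset Strict Implicit. Unset Printing Implicit Defensive.
Import Order.TTheory GRing.Theory Num.Theory.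
Local Open Scope ring_scope.

(* Vertices of the k x k grid network (0-based indices):
   inl (i, j)    = u_{i+1, j+1}
   inr (inl j)   = v_{j+1}
   inr (inr i)   = h_{i+1}                                              *)
Definition gvert (k : nat) : finType := ('I_k * 'I_k + ('I_k + 'I_k))%type.

(* Each edge is stored once, as an ordered pair of its endpoints. *)
Definition is_gedge (k : nat) (e : gvert k * gvert k) : bool :=
  match e with
  | (inl (i, j), inl (i', j')) =>
      ((val i' == (val i).+1)%N && (j' == j)) ||
      ((i' == i) && (val j' == (val j).+1)%N)
  | (inr (inl j), inl (i', j')) => (val i' == 0)%N && (j' == j)
  | (inr (inr i), inl (i', j')) => (i' == i) && (val j' == 0)%N
  | _ => false
  end.

Definition gedge (k : nat) : finType := {e : gvert k * gvert k | is_gedge e}.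

(* The cost function c (values on non-edges are irrelevant). *)
Definition gcost (k : nat) (e : gvert k * gvert k) : rat :=
  let K := (k%:R : rat) ^+ 4 in
  match e with
  | (inr _, _) => K
  | (inl (i, j), inl (i', j')) =>
      if j == j' then                                (* u_{i,j} u_{i+1,j} *)
        (if (val j == k.-1)%N then K else 1)
      else                                           (* u_{i,j} u_{i,j+1} *)
        (if (val i == k.-1)%N then K else 1 - ((val j).+1)%:R / K)
  | _ => 0
  end.

Definition terminals (k : nat) : {set gvert k} := [set x | ~~ is_inl x].

(* S represents a nontrivial bipartition {S, Q \ S} of Q. *)
Definition nontrivial_bip (k : nat) (S : {set gvert k}) : Prop :=
  S \subset terminals k /\ S != set0 /\ S != terminals k.

Definition separating (k : nat) (S W : {set gvert k}) : bool :=
  (W :&: terminals k == S) || (W :&: terminals k == terminals k :\: S).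

Definition cutset (k : nat) (W : {set gvert k}) : {set gedge k} :=
  [set e : gedge k | (fst (val e) \in W) != (snd (val e) \in W)].

Definition cutcost (k : nat) (W : {set gvert k}) : rat :=
  \sum_(e in cutset W) gcost (val e).

Definition min_sep_cut (k : nat) (S W : {set gvert k}) : Prop :=
  separating S W /\
  forall W' : {set gvert k}, separating S W' -> cutcost W <= cutcost W'.

Definition incidence_mx (k m : nat) (W : 'I_m -> {set gvert k})
  : 'M[rat]_(m, #|gedge k|) :=
  \matrix_(t < m, j < #|gedge k|) ((enum_val j \in cutset (W t)) : nat)%:R.

From HB Require Import structures.
From mathcomp Require Import all_boot all_order all_algebra.
From mathcomp Require Import zify lra.
Import Order.TTheory GRing.Theory Num.Theory.
Set Implicit Arguments. Unset Strict Implicit. Unset Printing Implicit Defensive.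

(* The corner cut R_ij = S_ij + {u a b | a <= i, b <= j} costs
   B_ij = (j+1) + (i+1)(1 - (j+1)/K), K = k^4, so a minimum S_ij-separating
   cut costs at most B_ij.  Any such cheap cut X cuts no heavy edge
   (B_ij < K), which fixes X on the first row and column and excludes the
   last ones; hence every column b <= j and row a <= i is crossed, and the
   budget (light vertical edges cost 1, light horizontal ones at least
   1 - (k-1)/K and less the further right) leaves room only for the corner
   picture: X cuts the vertical edge u i j - u (i+1) j and no other light
   vertical edge in a column b >= j.  Ordering the (k-1)^2 pairs (i, j)
   column by column gives a triangular minor of A_G with unit diagonal. *)

Lemma walk_const (f : nat -> bool) (m : nat) :
  (forall a, a < m -> f a = f a.+1) -> forall a, a <= m -> f a = f 0.
Proof.
move=> step; elim=> [//|a IH] ha.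
by rewrite -step ?IH // ltnW.
Qed.

Lemma walk_switch (f : nat -> bool) (m : nat) :
  f 0 != f m -> exists2 a, a < m & f a != f a.+1.
Proof.
elim: m => [|m IH]; first by rewrite eqxx.
case: (eqVneq (f m) (f m.+1)) => [<- /IH [a am fa]|fm _]; last by exists m.
by exists a => //; apply: ltnW.
Qed.

Lemma sum_prefix (m j : nat) : j < m -> \sum_(b < m) (b <= j) = j.+1.
Proof.
suff -> : \sum_(b < m) (b <= j) = minn m j.+1 by lia.
elim: m => [|m IH]; first by rewrite big_ord0.
by rewrite big_ord_recr /= IH; case: leqP => /= h; lia.
Qed.

Lemma sum_point (m a0 : nat) : a0 < m -> \sum_(a < m) (a == a0 :> nat) = 1.
Proof.
move=> ha0; rewrite (bigD1 (Ordinal ha0)) //= eqxx big1 // => a.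
by rewrite -val_eqE /= => /negbTE ->.
Qed.

Lemma tight_lower_bound (m j : nat) (N : nat -> nat) : j < m ->
    (forall b, b <= j -> 0 < N b) -> \sum_(b < m) N b <= j.+1 ->
  forall b, b < m -> N b = (b <= j).
Proof.
move=> hj pos total b hb.
have pointwise (b' : 'I_m) : (b' <= j : nat) <= N b' ?= iff ((b' <= j : nat) == N b').
  by apply/leqif_eq; case: (leqP b' j) => [/pos|].
have [le_sum eq_sum] := leqif_sum (fun b' (_ : true) => pointwise b').
move: eq_sum; rewrite eqn_leq {}le_sum sum_prefix // total /=.
by move/esym/forallP/(_ (Ordinal hb))/eqP.
Qed.

Lemma setCI_compl (T : finType) (Q S W : {set T}) : S \subset Q ->
  W :&: Q = Q :\: S -> ~: W :&: Q = S.
Proof.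
move=> /subsetP SQ /setP WQ; apply/setP => x; have := WQ x; rewrite !inE.
by case: (boolP (x \in S)) => [/SQ ->|_]; case: (x \in W); case: (x \in Q).
Qed.

Local Open Scope ring_scope.

Lemma mxrank_colsub (F : fieldType) (m p q : nat) (c : 'I_q -> 'I_p)
    (A : 'M[F]_(m, p)) :
  (\rank (colsub c A) <= \rank A)%N.
Proof.
have -> : colsub c A = A *m colsub c 1%:M by rewrite mulmx_colsub mulmx1.
exact: mxrankM_maxl.
Qed.

Lemma rank_ge_triangular_minor (F : fieldType) (m p N : nat)
    (A : 'M[F]_(m, p)) (r : 'I_N -> 'I_m) (c : 'I_N -> 'I_p) :
  (forall x y : 'I_N, (x < y)%N -> A (r x) (c y) = 0) ->
  (forall x : 'I_N, A (r x) (c x) != 0) ->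
  (N <= \rank A)%N.
Proof.
move=> upper diag; pose B := rowsub r (colsub c A).
have trigB : is_trig_mx B by apply/is_trig_mxP => x y xy; rewrite !mxE upper.
have : B \in unitmx.
  by rewrite unitmxE (det_trig trigB) unitfE; apply/prodf_neq0 => x _; rewrite !mxE.
move/mxrank_unit <-; apply: leq_trans (mxrank_colsub c A).
exact/mxrankS/rowsub_sub.
Qed.

Lemma column_major_order (d : nat) (x y : 'I_(d * d)) : (x < y)%N ->
  (x %/ d <= y %/ d)%N /\ (y %% d != x %% d)%N || (y %/ d != x %/ d)%N.
Proof.
move=> xy; split; first exact: leq_div2r (ltnW xy).
rewrite -negb_and; apply: contraTN xy => /andP[/eqP er /eqP ec].
by rewrite -leqNgt (divn_eq y d) (divn_eq x d) er ec.
Qed.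

Section RingSums.
Variable R : pzSemiRingType.

Lemma sumr_prefix (m i : nat) (x : R) : (i < m)%N ->
  \sum_(a < m) (if (a <= i)%N then x else 0) = i.+1%:R * x.
Proof.
move=> hi; under eq_bigr do rewrite -mulrb -mulr_natl.
by rewrite -mulr_suml -natr_sum sum_prefix.
Qed.

Lemma sumr_point (m a0 : nat) (y : R) : (a0 < m)%N ->
  \sum_(a < m) (if a == a0 :> nat then y else 0) = y.
Proof.
move=> ha0; under eq_bigr do rewrite -mulrb -mulr_natl.
by rewrite -mulr_suml -natr_sum sum_point // mul1r.
Qed.

End RingSums.

(* Separating S and separating its complement in Q are the same condition,
   so minimum cuts for S are minimum cuts for Q \ S. *)
Lemma min_sep_cut_compl (k : nat) (S W : {set gvert k}) : S \subset terminals k ->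
  min_sep_cut S W -> min_sep_cut (terminals k :\: S) W.
Proof.
move=> SQ; have QQS : terminals k :\: (terminals k :\: S) = S.
  by rewrite setDDr setDv set0U; apply/setIidPr.
have sepC W' : separating (terminals k :\: S) W' = separating S W'.
  by rewrite /separating QQS orbC.
by case=> sep minimal; split=> [|W' sep']; rewrite ?sepC // minimal // -sepC.
Qed.

Lemma chosen_min_cut (k m : nat) (S W : 'I_m -> {set gvert k}) :
    (forall t, S t \subset terminals k) ->
    (forall S', nontrivial_bip S' -> exists t, S' = S t \/ S' = terminals k :\: S t) ->
    (forall t, min_sep_cut (S t) (W t)) ->
  forall S', nontrivial_bip S' -> {t | min_sep_cut S' (W t)}.
Proof.
move=> SQ cover minW S' S'nt.
have rep : exists t, (S' == S t) || (S' == terminals k :\: S t).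
  by have [t [->|->]] := cover _ S'nt; exists t; rewrite eqxx ?orbT.
exists (xchoose rep); move: (xchoose rep) (xchooseP rep) => t.
by case/orP=> /eqP ->; [apply: minW | apply: min_sep_cut_compl].
Qed.

Section Grid.
Variable n : nat.
Local Notation k := n.+3.

Definition u (a b : nat) : gvert k := inl (inord a, inord b).
Definition vedge (a b : nat) : gvert k * gvert k := (u a b, u a.+1 b).
Definition hedge (a b : nat) : gvert k * gvert k := (u a b, u a b.+1).
Definition vterm (b : nat) : gvert k * gvert k := (inr (inl (inord b)), u 0 b).
Definition hterm (a : nat) : gvert k * gvert k := (inr (inr (inord a)), u a 0).

Definition edge_index : finType :=
  (('I_n.+2 * 'I_k + 'I_k * 'I_n.+2) + ('I_k + 'I_k))%type.

Definition edge_of (x : edge_index) : gvert k * gvert k :=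
  match x with
  | inl (inl (a, b)) => vedge a b
  | inl (inr (a, b)) => hedge a b
  | inr (inl b) => vterm b
  | inr (inr a) => hterm a
  end.

Lemma edge_of_is_edge (x : edge_index) : is_gedge (edge_of x).
Proof.
case: x => [[[a b]|[a b]]|[b|a]] /=; rewrite !inordK ?eqxx ?orbT //.
all: by move: (ltn_ord a) (ltn_ord b); lia.
Qed.

Definition index_of (p : gvert k * gvert k) : edge_index :=
  match p with
  | (inl (c, d), inl (c', _)) =>
      if val c' == (val c).+1 then inl (inl (inord c, d))
      else inl (inr (c, inord d))
  | (inr (inl d), _) => inr (inl d)
  | (inr (inr c), _) => inr (inr c)
  | (inl _, inr _) => inr (inl ord0)
  end.

Lemma edge_ofK : cancel edge_of index_of.
Proof.
case=> [[[a b]|[a b]]|[b|a]] /=; rewrite ?inordK ?inord_val ?eqxx //;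
  try by move: (ltn_ord a) (ltn_ord b); lia.
by rewrite ifN // neq_ltn ltnSn.
Qed.

Lemma index_ofK p : is_gedge p -> edge_of (index_of p) = p.
Proof.
case: p => [[[c d]|[d|c]] [[c' d']|w]] //=.
- case/orP=> [/andP[/eqnP c'E /eqP d'E]|/andP[/eqP c'E /eqnP d'E]]; last first.
    rewrite c'E ifN; last by rewrite neq_ltn ltnSn.
    rewrite /= /hedge /u inordK; last by rewrite -ltnS -d'E.
    by rewrite -d'E !inord_val.
  rewrite c'E eqxx /= /vedge /u inordK; last by rewrite -ltnS -c'E.
  by rewrite -c'E d'E !inord_val.
- by case/andP=> /eqnP c'E /eqP ->; rewrite /vterm /u -c'E !inord_val.
- by case/andP=> /eqP -> /eqnP d'E; rewrite /hterm /u -d'E !inord_val.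
Qed.

Definition edge_at (x : edge_index) : gedge k := Sub (edge_of x) (edge_of_is_edge x).

Lemma edge_at_bij : bijective edge_at.
Proof.
exists (fun e => index_of (val e)) => [x|e]; first by rewrite SubK edge_ofK.
by apply: val_inj; rewrite SubK index_ofK // (valP e).
Qed.

Lemma sum_over_edges (F : gvert k * gvert k -> rat) :
  \sum_(e : gedge k) F (val e) = \sum_(x : edge_index) F (edge_of x).
Proof.
rewrite (reindex edge_at); last exact: onW_bij edge_at_bij.
by apply: eq_bigr => x _; rewrite SubK.
Qed.

Lemma vedge_is_edge (a b : nat) : (a < n.+2)%N -> (b < k)%N -> is_gedge (vedge a b).
Proof.
by move=> ha hb; apply: (edge_of_is_edge (inl (inl (Ordinal ha, Ordinal hb)))).
Qed.

Lemma hedge_is_edge (a b : nat) : (a < k)%N -> (b < n.+2)%N -> is_gedge (hedge a b).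
Proof.
by move=> ha hb; apply: (edge_of_is_edge (inl (inr (Ordinal ha, Ordinal hb)))).
Qed.

Lemma vterm_is_edge (b : nat) : (b < k)%N -> is_gedge (vterm b).
Proof. by move=> hb; apply: (edge_of_is_edge (inr (inl (Ordinal hb)))). Qed.

Lemma hterm_is_edge (a : nat) : (a < k)%N -> is_gedge (hterm a).
Proof. by move=> ha; apply: (edge_of_is_edge (inr (inr (Ordinal ha)))). Qed.

Definition K : rat := k%:R ^+ 4.

Lemma K_gt0 : 0 < K.
Proof. by rewrite exprn_gt0 ?ltr0n. Qed.

Lemma frac_K_le1 (c : nat) : (c <= k)%N -> c%:R / K <= 1.
Proof.
move=> hc; rewrite ler_pdivrMr ?K_gt0 // mul1r /K -natrX ler_nat.
by apply: leq_trans hc _; rewrite -{1}(expn1 k) leq_pexp2l.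
Qed.

Lemma frac_K_lt1 (x : nat) : (x < k ^ 4)%N -> x%:R / K < 1.
Proof. by move=> hx; rewrite ltr_pdivrMr ?K_gt0 // mul1r /K -natrX ltr_nat. Qed.

Lemma gcost_ge0 (p : gvert k * gvert k) : 0 <= gcost p.
Proof.
have K_ge0 : 0 <= K by rewrite ltW ?K_gt0.
case: p => [[[c d]|[d|c]] [[c' d']|w]] //=; do 2?case: ifP => _ //.
by rewrite subr_ge0 frac_K_le1.
Qed.

Lemma gcost_vedge (a b : nat) : (a < n.+2)%N -> (b < k)%N ->
  gcost (vedge a b) = if b == n.+2 then K else 1.
Proof. by move=> ha hb; rewrite /= eqxx inordK. Qed.

Lemma gcost_hedge (a b : nat) : (a < k)%N -> (b < n.+2)%N ->
  gcost (hedge a b) = if a == n.+2 then K else 1 - b.+1%:R / K.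
Proof.
move=> ha hb; rewrite /= ifN; first by rewrite !inordK // ltnW.
by rewrite -val_eqE /= !inordK ?neq_ltn ?ltnSn // ltnW.
Qed.

Definition cutp (X : {set gvert k}) (p : gvert k * gvert k) : bool :=
  (p.1 \in X) != (p.2 \in X).

Lemma mem_cutset (X : {set gvert k}) (e : gedge k) : (e \in cutset X) = cutp X (val e).
Proof. by rewrite inE. Qed.

Lemma cutp_vedge X a b : cutp X (vedge a b) = ((u a b \in X) != (u a.+1 b \in X)).
Proof. by []. Qed.

Lemma cutp_hedge X a b : cutp X (hedge a b) = ((u a b \in X) != (u a b.+1 \in X)).
Proof. by []. Qed.

Lemma cutp_vterm X b :
  cutp X (vterm b) = ((inr (inl (inord b)) \in X) != (u 0 b \in X)).
Proof. by []. Qed.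

Lemma cutp_hterm X a :
  cutp X (hterm a) = ((inr (inr (inord a)) \in X) != (u a 0 \in X)).
Proof. by []. Qed.

Lemma cutp_setC (X : {set gvert k}) p : cutp (~: X) p = cutp X p.
Proof. by rewrite /cutp !inE; case: (_ \in X); case: (_ \in X). Qed.

Lemma cutcost_setC (X : {set gvert k}) : cutcost (~: X) = cutcost X.
Proof. by apply: eq_bigl => e; rewrite !inE; case: (_ \in X); case: (_ \in X). Qed.

Lemma cut_edge_le_cutcost X p : is_gedge p -> cutp X p -> gcost p <= cutcost X.
Proof.
move=> hp cut; rewrite /cutcost (bigD1 (Sub p hp : gedge k)) ?inE //= lerDl.
by apply: sumr_ge0 => e _; apply: gcost_ge0.
Qed.

Definition charge (X : {set gvert k}) (p : gvert k * gvert k) : rat :=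
  if cutp X p then gcost p else 0.

Lemma charge_ge0 X p : 0 <= charge X p.
Proof. by rewrite /charge; case: ifP => // _; apply: gcost_ge0. Qed.

Lemma cutcost_split X : cutcost X =
  \sum_(a < n.+2) \sum_(b < k) charge X (vedge a b)
  + \sum_(a < k) \sum_(b < n.+2) charge X (hedge a b)
  + (\sum_(b < k) charge X (vterm b) + \sum_(a < k) charge X (hterm a)).
Proof.
rewrite /cutcost big_mkcond /=.
transitivity (\sum_(e : gedge k) charge X (val e)).
  by apply: eq_bigr => e _; rewrite inE.
rewrite sum_over_edges !big_sumType /= !pair_bigA /=.
by congr (_ + _ + _); apply: eq_bigr => -[].
Qed.

Definition col_cuts (X : {set gvert k}) (b : nat) : nat :=
  \sum_(a < n.+2) cutp X (vedge a b).

Definition hweight (X : {set gvert k}) (a b : nat) : rat :=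
  if cutp X (hedge a b) then 1 - b.+1%:R / K else 0.

Lemma hweight_ge0 X a b : (b < k)%N -> 0 <= hweight X a b.
Proof.
by move=> hb; rewrite /hweight; case: ifP => // _; rewrite subr_ge0 frac_K_le1.
Qed.

Lemma row_hweight_ge0 X a : 0 <= \sum_(b < n.+2) hweight X a b.
Proof. by apply: sumr_ge0 => b _; rewrite hweight_ge0 // leqW. Qed.

Lemma light_cost_le X :
  (\sum_(b < n.+2) col_cuts X b)%:R + \sum_(a < n.+2) \sum_(b < n.+2) hweight X a b
    <= cutcost X.
Proof.
have ge0 := charge_ge0 X.
rewrite cutcost_split; apply: ler_wpDr; first by rewrite addr_ge0 ?sumr_ge0.
apply: lerD.
  rewrite /col_cuts natr_sum; under eq_bigr do rewrite natr_sum.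
  rewrite exchange_big /=; apply: ler_sum => a _.
  rewrite [X in _ <= X]big_ord_recr /= ler_wpDr //; apply: ler_sum => b _.
  rewrite /charge gcost_vedge ?(leqW (ltn_ord b)) // (ltn_eqF (ltn_ord b)).
  by case: cutp.
rewrite [X in _ <= X]big_ord_recr /= ler_wpDr ?sumr_ge0 //.
apply: ler_sum => a _; apply: ler_sum => b _.
by rewrite /charge /hweight gcost_hedge ?(leqW (ltn_ord a)) // (ltn_eqF (ltn_ord a)).
Qed.

Definition Sij (i j : nat) : {set gvert k} := [set x : gvert k |
  match x with
  | inl _ => false
  | inr (inl b) => (b <= j)%N
  | inr (inr a) => (a <= i)%N
  end].

Definition Rij (i j : nat) : {set gvert k} := [set x : gvert k |
  match x with
  | inl (a, b) => (a <= i)%N && (b <= j)%N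
  | inr (inl b) => (b <= j)%N
  | inr (inr a) => (a <= i)%N
  end].

Definition Bij (i j : nat) : rat := j.+1%:R + i.+1%:R * (1 - j.+1%:R / K).

Lemma Sij_nontrivial i j : (j < n.+2)%N -> nontrivial_bip (Sij i j).
Proof.
move=> hj; split; first by apply/subsetP => -[x|[b|a]]; rewrite !inE.
split; first by apply/set0Pn; exists (inr (inl ord0)); rewrite inE.
apply/eqP => /setP/(_ (inr (inl ord_max))); rewrite !inE /=.
by move/idP; rewrite leqNgt hj.
Qed.

Lemma Rij_terminals i j : Rij i j :&: terminals k = Sij i j.
Proof. by apply/setP => -[[a b]|[b|a]]; rewrite !inE ?andbF ?andbT. Qed.

Lemma mem_u_Rij i j a b : (a < k)%N -> (b < k)%N ->
  (u a b \in Rij i j) = (a <= i)%N && (b <= j)%N.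
Proof. by move=> ha hb; rewrite inE /= !inordK. Qed.

Lemma charge_vedge_Rij i j a b : (j < n.+2)%N -> (a < n.+2)%N -> (b < k)%N ->
  charge (Rij i j) (vedge a b) = if (b <= j)%N then (if a == i then 1 else 0) else 0.
Proof.
move=> hj ha hb; rewrite /charge cutp_vedge !mem_u_Rij ?(leqW ha) //.
case: (leqP b j) => hbj; last by rewrite !andbF.
rewrite !andbT gcost_vedge // (ltn_eqF (leq_ltn_trans hbj hj)).
by case: (ltngtP a i).
Qed.

Lemma charge_hedge_Rij i j a b : (i < n.+2)%N -> (a < k)%N -> (b < n.+2)%N ->
  charge (Rij i j) (hedge a b) =
  if b == j then (if (a <= i)%N then 1 - j.+1%:R / K else 0) else 0.
Proof.
move=> hi ha hb; rewrite /charge cutp_hedge !mem_u_Rij ?(leqW hb) //.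
case: (leqP a i) => hai; last by rewrite !andFb if_same.
rewrite !andTb gcost_hedge // (ltn_eqF (leq_ltn_trans hai hi)).
by case: (ltngtP b j) => // ->.
Qed.

Lemma cutcost_Rij i j : (i < n.+2)%N -> (j < n.+2)%N -> cutcost (Rij i j) = Bij i j.
Proof.
move=> hi hj; rewrite cutcost_split.
have vertical : \sum_(a < n.+2) \sum_(b < k) charge (Rij i j) (vedge a b) = j.+1%:R.
  rewrite -(sumr_point j.+1%:R hi); apply: eq_bigr => a _.
  under eq_bigr => b _ do rewrite (charge_vedge_Rij _ hj (ltn_ord a) (ltn_ord b)).
  by rewrite sumr_prefix ?(leqW hj) //; case: eqP; rewrite ?mulr1 ?mulr0.
have horizontal : \sum_(a < k) \sum_(b < n.+2) charge (Rij i j) (hedge a b) =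
    i.+1%:R * (1 - j.+1%:R / K).
  rewrite -(sumr_prefix (m := k)) ?(leqW hi) //; apply: eq_bigr => a _.
  under eq_bigr => b _ do rewrite (charge_hedge_Rij _ hi (ltn_ord a) (ltn_ord b)).
  exact: sumr_point.
have uncut_free p : ~~ cutp (Rij i j) p -> charge (Rij i j) p = 0.
  by rewrite /charge => /negbTE ->.
rewrite vertical horizontal !big1 ?addr0 // => c _; apply: uncut_free.
  by rewrite cutp_hterm mem_u_Rij // inE /= inordK // andbT eqxx.
by rewrite cutp_vterm mem_u_Rij // inE /= inordK // eqxx.
Qed.

(* Arithmetic on the budget B_ij: it is below a heavy edge, and below the cost
   of one extra light vertical edge or one extra cut row.  min_hweight is the
   least cost of a light horizontal edge. *)
Definition min_hweight : rat := 1 - n.+2%:R / K.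

Lemma Bij_lt_K i j : (i < n.+2)%N -> (j < n.+2)%N -> Bij i j < K.
Proof.
move=> hi hj; have : (j.+1 + i.+1 < k ^ 4)%N by rewrite !expnS expn0 muln1; nia.
have : 0 <= i.+1%:R * (j.+1%:R / K) by rewrite mulr_ge0 ?divr_ge0 ?ler0n ?ltW ?K_gt0.
rewrite -(ltr_nat rat) natrD natrX -/K /Bij; lra.
Qed.

Lemma Bij_lt_extra_column i j : (i < n.+2)%N ->
  Bij i j < j.+2%:R + i.+1%:R * min_hweight.
Proof.
move=> hi; have : i.+1%:R * n.+2%:R / K < 1.
  by rewrite -natrM frac_K_lt1 // !expnS expn0 muln1; nia.
have : 0 <= i.+1%:R * (j.+1%:R / K) by rewrite mulr_ge0 ?divr_ge0 ?ler0n ?ltW ?K_gt0.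
have : j.+2%:R = j.+1%:R + 1 :> rat by rewrite natr1.
rewrite /Bij /min_hweight; lra.
Qed.

Lemma Bij_lt_extra_row i j : (i < n.+2)%N ->
  Bij i j < j.+1%:R + (i.+1%:R * min_hweight + min_hweight).
Proof.
move=> hi; have : i.+2%:R * n.+2%:R / K < 1.
  by rewrite -natrM frac_K_lt1 // !expnS expn0 muln1; nia.
have : 0 <= i.+1%:R * (j.+1%:R / K) by rewrite mulr_ge0 ?divr_ge0 ?ler0n ?ltW ?K_gt0.
have : i.+2%:R = i.+1%:R + 1 :> rat by rewrite natr1.
rewrite /Bij /min_hweight; lra.
Qed.

Section MinimumCut.
Variables (i j : nat) (X : {set gvert k}).
Hypotheses (hi : (i < n.+2)%N) (hj : (j < n.+2)%N).
Hypothesis X_terminals : X :&: terminals k = Sij i j.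
Hypothesis X_cost : cutcost X <= Bij i j.

Lemma heavy_uncut p : is_gedge p -> gcost p = K -> ~~ cutp X p.
Proof.
move=> hp costK; apply/negP => cut.
have := le_lt_trans (le_trans (cut_edge_le_cutcost hp cut) X_cost) (Bij_lt_K hi hj).
by rewrite costK ltxx.
Qed.

Lemma same_side (p : gvert k * gvert k) : ~~ cutp X p -> (p.1 \in X) = (p.2 \in X).
Proof. by rewrite /cutp negbK => /eqP. Qed.

Lemma mem_terminal x : ~~ is_inl x -> (x \in X) = (x \in Sij i j).
Proof. by move=> hx; rewrite -X_terminals !inE hx andbT. Qed.

(* Terminal edges are heavy, so the first row and column copy S_ij ... *)
Lemma mem_top b : (b < k)%N -> (u 0 b \in X) = (b <= j)%N.
Proof.
move=> hb; rewrite -(same_side (heavy_uncut (vterm_is_edge hb) (erefl K))) /=.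
by rewrite mem_terminal // inE /= inordK.
Qed.

Lemma mem_left a : (a < k)%N -> (u a 0 \in X) = (a <= i)%N.
Proof.
move=> ha; rewrite -(same_side (heavy_uncut (hterm_is_edge ha) (erefl K))) /=.
by rewrite mem_terminal // inE /= inordK.
Qed.

(* ... and the heavy last row and last column lie outside X. *)
Lemma mem_bottom b : (b < k)%N -> u n.+2 b \notin X.
Proof.
move=> hb; rewrite (walk_const (f := fun c => u n.+2 c \in X) (m := n.+2) _ hb).
  by rewrite mem_left // -ltnNge.
move=> c hc; apply: (same_side (p := hedge n.+2 c)); apply: heavy_uncut.
  exact: hedge_is_edge.
by rewrite gcost_hedge ?eqxx.
Qed.

Lemma mem_right a : (a < k)%N -> u a n.+2 \notin X.
Proof.
move=> ha; rewrite (walk_const (f := fun c => u c n.+2 \in X) (m := n.+2) _ ha).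
  by rewrite mem_top // -ltnNge.
move=> c hc; apply: (same_side (p := vedge c n.+2)); apply: heavy_uncut.
  exact: vedge_is_edge.
by rewrite gcost_vedge ?eqxx.
Qed.

Lemma col_cuts_pos b : (b <= j)%N -> (0 < col_cuts X b)%N.
Proof.
move=> hbj; have hb : (b < k)%N by apply: leq_ltn_trans hbj (leqW hj).
have [a ha cut] : exists2 a, (a < n.+2)%N & cutp X (vedge a b).
  apply: (walk_switch (f := fun a => u a b \in X)).
  by rewrite mem_top // hbj (negbTE (mem_bottom hb)).
by rewrite /col_cuts (bigD1 (Ordinal ha)) //= cut.
Qed.

Lemma col_cuts_ge : (j.+1 <= \sum_(b < n.+2) col_cuts X b)%N.
Proof.
rewrite -(sum_prefix hj); apply: leq_sum => b _.
by case: (leqP b j) => [/col_cuts_pos|].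
Qed.

Lemma row_hweight_ge a c : (c < k)%N ->
  u a 0 \in X -> u a c \notin X -> 1 - c%:R / K <= \sum_(b < n.+2) hweight X a b.
Proof.
move=> hc in0 outc.
have switch : (u a 0 \in X) != (u a c \in X) by rewrite in0 (negbTE outc).
have [b hbc cut] := walk_switch (f := fun b => u a b \in X) switch.
have hb : (b < n.+2)%N by apply: leq_trans hbc _.
rewrite (bigD1 (Ordinal hb)) //= ler_wpDr ?sumr_ge0 // => [b' _|].
  by rewrite hweight_ge0 // leqW.
by rewrite /hweight cutp_hedge cut lerD2l lerN2 ler_pM2r ?invr_gt0 ?K_gt0 // ler_nat.
Qed.

Lemma light_budget (v : nat) (h : rat) :
    (v <= \sum_(b < n.+2) col_cuts X b)%N ->
    h <= \sum_(a < n.+2) \sum_(b < n.+2) hweight X a b ->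
  v%:R + h <= Bij i j.
Proof.
move=> hv hh; apply: le_trans (le_trans (light_cost_le X) X_cost).
by rewrite lerD // ler_nat.
Qed.

Lemma low_rows_hweight_ge a : (a < n.+2)%N -> (a <= i)%N ->
  min_hweight <= \sum_(b < n.+2) hweight X a b.
Proof.
move=> ha hai; have ha' : (a < k)%N := leqW ha.
by apply: row_hweight_ge; rewrite ?mem_left ?mem_right.
Qed.

Lemma col_cuts_total : (\sum_(b < n.+2) col_cuts X b <= j.+1)%N.
Proof.
rewrite leqNgt; apply/negP => many.
have rows : i.+1%:R * min_hweight <= \sum_(a < n.+2) \sum_(b < n.+2) hweight X a b.
  rewrite -(sumr_prefix (m := n.+2)) //; apply: ler_sum => a _.
  case: leqP => hai; last exact: row_hweight_ge0.
  exact: low_rows_hweight_ge.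
by have := light_budget many rows; rewrite leNgt Bij_lt_extra_column.
Qed.

Lemma col_cuts_eq b : (b < n.+2)%N -> col_cuts X b = (b <= j)%N.
Proof. exact: tight_lower_bound hj col_cuts_pos col_cuts_total b. Qed.

Lemma no_low_hcut a b : (i < a)%N -> (a < n.+2)%N -> (b < n.+2)%N ->
  ~~ cutp X (hedge a b).
Proof.
move=> hia ha hb; apply/negP => cut.
have rows : \sum_(a' < n.+2) ((if (a' <= i)%N then min_hweight else 0)
                              + (if a' == a :> nat then min_hweight else 0))
    <= \sum_(a' < n.+2) \sum_(b' < n.+2) hweight X a' b'.
  apply: ler_sum => a' _; case: leqP => ha'i.
    rewrite ifN ?addr0; last by apply/eqP => ea; move: hia; rewrite -ea ltnNge ha'i.
    exact: low_rows_hweight_ge.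
  rewrite add0r; case: eqP => [->|_]; last exact: row_hweight_ge0.
  rewrite (bigD1 (Ordinal hb)) //= ler_wpDr ?sumr_ge0 // => [b' _|].
    by rewrite hweight_ge0 // leqW.
  by rewrite /hweight cut /min_hweight lerD2l lerN2 ler_pM2r ?invr_gt0 ?K_gt0 // ler_nat.
move: rows; rewrite big_split /= sumr_prefix // sumr_point // => rows.
by have := light_budget col_cuts_ge rows; rewrite leNgt Bij_lt_extra_row.
Qed.

Lemma vedge_uncut_right a b : (j < b)%N -> (b < n.+2)%N -> (a < n.+2)%N ->
  ~~ cutp X (vedge a b).
Proof.
move=> hjb hb ha; apply/negP => cut; have := col_cuts_eq hb.
by rewrite /col_cuts (bigD1 (Ordinal ha)) //= cut leqNgt hjb.
Qed.

Lemma mem_right_of_j a b : (j < b)%N -> (b < k)%N -> (a < k)%N -> u a b \notin X.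
Proof.
move=> hjb hb ha; case: (ltnP b n.+2) => hb'; last first.
  have -> : b = n.+2 by apply/eqP; rewrite eqn_leq hb' andbT -ltnS.
  exact: mem_right ha.
rewrite (walk_const (f := fun a => u a b \in X) (m := n.+2) _ ha).
  by rewrite mem_top // -ltnNge.
move=> a' ha'; apply: (same_side (p := vedge a' b)).
exact: vedge_uncut_right.
Qed.

Lemma mem_below_i a b : (i < a)%N -> (a < k)%N -> (b < k)%N -> u a b \notin X.
Proof.
move=> hia ha hb; case: (ltnP a n.+2) => ha'; last first.
  have -> : a = n.+2 by apply/eqP; rewrite eqn_leq ha' andbT -ltnS.
  exact: mem_bottom hb.
rewrite (walk_const (f := fun b => u a b \in X) (m := n.+2) _ hb).
  by rewrite mem_left // -ltnNge.
move=> b' hb'; apply: (same_side (p := hedge a b')).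
exact: no_low_hcut.
Qed.

(* The corner u i j is in X: otherwise row i would leave X before column j,
   through a horizontal edge 1/K more expensive than the budget allows. *)
Lemma mem_corner : u i j \in X.
Proof.
apply/negPn/negP => out; pose c1 := 1 - j.+1%:R / K.
have hj' : (j < k)%N := leqW hj.
have rows : \sum_(a < n.+2) ((if (a <= i)%N then c1 else 0)
                             + (if a == i :> nat then 1 / K else 0))
    <= \sum_(a < n.+2) \sum_(b < n.+2) hweight X a b.
  apply: ler_sum => a _; have ha : (a < k)%N := leqW (ltn_ord a).
  case: (ltngtP a i) => [a_lt|a_gt|a_eq].
  - rewrite addr0; apply: row_hweight_ge => //; first by rewrite mem_left // ltnW.
    exact: mem_right_of_j.
  - by rewrite addr0; apply: row_hweight_ge0.
  rewrite a_eq; apply: le_trans (row_hweight_ge hj' _ out).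
    have : j.+1%:R = j%:R + 1 :> rat by rewrite natr1.
    by rewrite /c1; lra.
  by rewrite mem_left ?leqnn ?(leqW hi).
move: rows; rewrite big_split /= sumr_prefix // sumr_point // => rows.
have := light_budget col_cuts_ge rows; rewrite /Bij -/c1.
have : 0 < 1 / K by rewrite mul1r invr_gt0 K_gt0.
lra.
Qed.

Lemma corner_cut : cutp X (vedge i j).
Proof. by rewrite cutp_vedge mem_corner (negbTE (mem_below_i _ _ _)) // leqW. Qed.

Lemma vedge_uncut a b : (a < n.+2)%N -> (b < n.+2)%N -> (j <= b)%N ->
  (a != i) || (b != j) -> ~~ cutp X (vedge a b).
Proof.
move=> ha hb; rewrite leq_eqVlt => /orP[/eqP jb|jb _]; last exact: vedge_uncut_right.
rewrite -jb eqxx orbF => a_ne; apply/negP => cut; have := col_cuts_eq hj.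
rewrite leqnn /col_cuts (bigD1 (Ordinal hi)) //= corner_cut.
by rewrite (bigD1 (Ordinal ha)) /= ?cut // -val_eqE.
Qed.

End MinimumCut.

(* The shape of a minimum S_ij-separating cut W: it is cheaper than R_ij, and
   W or its complement induces S_ij on the terminals. *)
Lemma min_cut_shape i j W : (i < n.+2)%N -> (j < n.+2)%N ->
    min_sep_cut (Sij i j) W ->
  cutp W (vedge i j) /\
  forall a b, (a < n.+2)%N -> (b < n.+2)%N -> (j <= b)%N ->
    (a != i) || (b != j) -> ~~ cutp W (vedge a b).
Proof.
move=> hi hj [sep minimal].
have cost : cutcost W <= Bij i j.
  by rewrite -cutcost_Rij // minimal // /separating Rij_terminals eqxx.
have [X XQ [Xcost Xcut]] : exists2 X, X :&: terminals k = Sij i j &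
    cutcost X <= Bij i j /\ cutp X =1 cutp W.
  case/orP: sep => /eqP WQ; first by exists W => //; split.
  exists (~: W); last by rewrite cutcost_setC; split=> // p; apply: cutp_setC.
  exact: setCI_compl (Sij_nontrivial i hj).1 WQ.
rewrite -!Xcut; split; first exact: corner_cut.
by move=> a b ha hb; rewrite -Xcut; apply: vedge_uncut.
Qed.

End Grid.

Unset Implicit Arguments.
Set Strict Implicit.

Theorem lemma3p8 (k : nat) (hk : (3 <= k)%N)
  (m : nat) (S : 'I_m -> {set gvert k}) (W : 'I_m -> {set gvert k})
  (hS : forall t, nontrivial_bip (S t))
  (hdist : forall t t', t != t' ->
     S t != S t' /\ S t != terminals k :\: S t')
  (hcover : forall S' : {set gvert k}, nontrivial_bip S' ->
     exists t, S' = S t \/ S' = terminals k :\: S t)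
  (hW : forall t, min_sep_cut (S t) (W t)) :
  ((k - 1) ^ 2 <= \rank (incidence_mx W))%N.
Proof.
case: k hk S W hS hdist hcover hW => [|[|[|n]]] // _ S W hS _ hcover hW.
pose d := n.+2; rewrite subn1 /= -/d -mulnn.
(* Index x < d * d stands for the cell (x %% d, x %/ d). *)
have row_lt (x : 'I_(d * d)) : (x %% d < d)%N by rewrite ltn_pmod.
have col_lt (x : 'I_(d * d)) : (x %/ d < d)%N by rewrite ltn_divLR.
pose cut_of (x : 'I_(d * d)) := chosen_min_cut (fun t => (hS t).1) hcover hW
                   (Sij_nontrivial (x %% d)%N (col_lt x)).
pose edge (y : 'I_(d * d)) : gedge n.+3 :=
  Sub (vedge n (y %% d)%N (y %/ d)%N) (vedge_is_edge (row_lt y) (leqW (col_lt y))).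
apply: (rank_ge_triangular_minor (r := fun x => sval (cut_of x))
                                 (c := fun y => enum_rank (edge y))) => [x y xy|x];
  rewrite mxE enum_rankK mem_cutset SubK;
  have [corner uncut] := min_cut_shape (row_lt x) (col_lt x) (svalP (cut_of x)).
- have [col_le distinct] := column_major_order xy.
  by rewrite (negbTE (uncut _ _ (row_lt y) (col_lt y) col_le distinct)).
- by rewrite corner oner_neq0.
Qed.
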